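(* Let $OPT$ be the optimal value of Problem (A) and $ALG$ the system throughput of the assignment output by Algorithm 1 (described below). Then $ALG\ge \frac{1}{2}\mu\cdot OPT$, where $\mu$ is defined below with respect to any partition $(C_i)$ as in the definition.
   Context: Setting: SUs $S=\{s_1,\dots,s_N\}$, channels $\{1,\dots,M\}$; SU $s_i$ has integer sensing budget $0\le l_i\le M$, and $\sum_i l_i\ge M$. For each $i,k$ let $P_f^i(k),P_m^i(k)\in[0,1]$; let $T_c\in[0,1)$, $\pi_0(k)\in[0,1]$, $\gamma(k)>0$, $\theta_1(k)=(1-T_c)\pi_0(k)$, $\theta_2(k)=\gamma(k)(1-\pi_0(k))$. For nonempty $A\subseteq S$ and $y\in\{0,1\}^A$ put $P^k_0(y)=\prod_{s_i\in A,y_i=1}P_f^i(k)\prod_{s_i\in A,y_i=0}(1-P_f^i(k))$, $P^k_1(y)=\prod_{s_i\in A,y_i=1}(1-P_m^i(k))\prod_{s_i\in A,y_i=0}P_m^i(k)$, and $U_k(A)=\sum_{y}\max\{\theta_2(k)P^k_1(y),\theta_1(k)P^k_0(y)\}$; $U_k(\emptyset)=\theta_2(k)$. A sensing assignment $(S_1,\dots,S_M)$, $S_k\subseteq S$, is feasible if each $s_i$ lies in at most $l_i$ of the $S_k$. Problem (A): maximize $\sum_k U_k(S_k)$ over feasible assignments. Algorithm 1: Build the complete bipartite graph with vertices $s_i^j$ ($i=1..N$, $j=1..l_i$; copies of SU $s_i$) on one side and channels $c_1,\dots,c_M$ on the other, edge weights $w(s_i^j,c_k)=U_k(\{s_i\})$.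 Compute a maximum weight matching $\mathcal M$; set $S_k=\{s_i:(s_i^j,c_k)\in\mathcal M\}$. For each unmatched copy $s_i^j$ in arbitrary order, add $s_i$ to $S_{k^*}$ where $k^*$ maximizes $U_k(S_k\cup\{s_i\})-U_k(S_k)$ over channels $k$ with $s_i\notin S_k$. Let $U=\sum_k U_k(S_k)$. If $\max_k U_k(S)>U$, instead output the assignment $S_{k^*}=S$ for $k^*=\arg\max_k U_k(S)$ and $S_k=\emptyset$ for $k\ne k^*$; otherwise output $(S_1,\dots,S_M)$. Parameter $\mu$: let $U_k^0=\min_{s_i\in S}U_k(\{s_i\})$, $U_k^*=\max_{s_i\in S}U_k(\{s_i\})$. Partition the channels into groups $C_i$ ($s_i\in S$), each channel $k$ placed in a group $C_i$ with $U_k(\{s_i\})\ge U_k(\{s_j\})$ for all $j\neq i$ (ties broken arbitrarily); $r_i=|C_i|$. Let $C_i^{l_i}$ be the first $\min\{l_i,r_i\}$ channels of $C_i$ when sorted by $U_k^0$ in non-increasing order. For $r_i>0$ let $\lambda_i=\min\{l_i,r_i\}/r_i$ and, when $C_i^{l_i}\ne\emptyset$, $\rho_i=\min_{k\in C_i^{l_i}}U_k^*/U_k^0$. Then $\mu=1+\min_i\lambda_i(\rho_i-1)$ (so $\mu\in[1,2]$). *)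

From HB Require Import structures.
From mathcomp Require Import all_boot all_order all_algebra.
Set Implicit Arguments. Unset Strict Implicit. Unset Printing Implicit Defensive.
Import Order.TTheory GRing.Theory Num.Theory.
Local Open Scope ring_scope.

(* SUs are 'I_N, channels are 'I_M. A subset A of SUs is a {set 'I_N};
   a vector y in {0,1}^A is represented by the subset Y = {i in A | y_i = 1}. *)

Definition theta1 {R : realFieldType} {M : nat} (Tc : R) (pi0 : 'I_M -> R)
  (k : 'I_M) : R := (1 - Tc) * pi0 k.
Definition theta2 {R : realFieldType} {M : nat} (gamma pi0 : 'I_M -> R)
  (k : 'I_M) : R := gamma k * (1 - pi0 k).

Definition P0 {R : realFieldType} {N M : nat} (Pf : 'I_N -> 'I_M -> R)
  (k : 'I_M) (A Y : {set 'I_N}) : R :=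
  (\prod_(i in Y) Pf i k) * \prod_(i in A :\: Y) (1 - Pf i k).
Definition P1 {R : realFieldType} {N M : nat} (Pm : 'I_N -> 'I_M -> R)
  (k : 'I_M) (A Y : {set 'I_N}) : R :=
  (\prod_(i in Y) (1 - Pm i k)) * \prod_(i in A :\: Y) Pm i k.

Definition Uk {R : realFieldType} {N M : nat} (Pf Pm : 'I_N -> 'I_M -> R)
  (Tc : R) (pi0 gamma : 'I_M -> R) (k : 'I_M) (A : {set 'I_N}) : R :=
  if A == set0 then theta2 gamma pi0 k
  else \sum_(Y in powerset A)
         Num.max (theta2 gamma pi0 k * P1 Pm k A Y) (theta1 Tc pi0 k * P0 Pf k A Y).

(* minimum / maximum of f over a finite set A (the true min/max when A is
   nonempty; the default values are irrelevant then). *)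
Definition minover {R : realFieldType} {T : finType} (A : {set T}) (f : T -> R) : R :=
  \big[Num.min/ \big[Num.max/0]_(x in A) f x]_(x in A) f x.
Definition maxover {R : realFieldType} {T : finType} (A : {set T}) (f : T -> R) : R :=
  \big[Num.max/ \big[Num.min/0]_(x in A) f x]_(x in A) f x.

Definition assignment (N M : nat) := {ffun 'I_M -> {set 'I_N}}.

Definition feasible {N M : nat} (l : 'I_N -> nat) (S : assignment N M) : bool :=
  [forall i : 'I_N, #|[set k | i \in S k]| <= l i]%N.

Definition throughput {R : realFieldType} {N M : nat}
  (Uf : 'I_M -> {set 'I_N} -> R) (S : assignment N M) : R :=
  \sum_(k : 'I_M) Uf k (S k).

Definition OPT {R : realFieldType} {N M : nat}
  (Uf : 'I_M -> {set 'I_N} -> R) (l : 'I_N -> nat) : R :=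
  \big[Num.max/0]_(S : {ffun 'I_M -> {set 'I_N}} | feasible l S) throughput Uf S.

(* Copies s_i^j: pairs (i, j) with j < l_i (0-based copy index). *)
Definition matching {N M : nat} (l : 'I_N -> nat)
  (m : {ffun 'I_M -> option ('I_N * 'I_M)}) : Prop :=
  (forall k c, m k = Some c -> (nat_of_ord c.2 < l c.1)%N) /\
  (forall k k' c, m k = Some c -> m k' = Some c -> k = k').

Definition weight {R : realFieldType} {N M : nat}
  (Uf : 'I_M -> {set 'I_N} -> R) (m : {ffun 'I_M -> option ('I_N * 'I_M)}) : R :=
  \sum_(k : 'I_M) (if m k is Some c then Uf k [set c.1] else 0).

Definition max_weight_matching {R : realFieldType} {N M : nat}
  (Uf : 'I_M -> {set 'I_N} -> R) (l : 'I_N -> nat)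
  (m : {ffun 'I_M -> option ('I_N * 'I_M)}) : Prop :=
  matching l m /\ forall m', matching l m' -> weight Uf m' <= weight Uf m.

Definition matched_assign {N M : nat} (m : {ffun 'I_M -> option ('I_N * 'I_M)})
  : assignment N M := [ffun k => if m k is Some c then [set c.1] else set0].

Definition unmatched {N M : nat} (l : 'I_N -> nat)
  (m : {ffun 'I_M -> option ('I_N * 'I_M)}) (c : 'I_N * 'I_M) : bool :=
  (nat_of_ord c.2 < l c.1)%N && [forall k, m k != Some c].

Definition greedy_step {R : realFieldType} {N M : nat}
  (Uf : 'I_M -> {set 'I_N} -> R) (S : assignment N M) (i : 'I_N)
  (S' : assignment N M) : Prop :=
  (exists2 k, i \notin S k &
     (forall k', i \notin S k' ->
        Uf k' (i |: S k') - Uf k' (S k') <= Uf k (i |: S k) - Uf k (S k)) /\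
     S' = [ffun k'' => if k'' == k then i |: S k'' else S k''])
  \/ ((forall k, i \in S k) /\ S' = S).

Inductive greedy_run {R : realFieldType} {N M : nat}
  (Uf : 'I_M -> {set 'I_N} -> R) :
  assignment N M -> seq ('I_N * 'I_M) -> assignment N M -> Prop :=
| greedy_nil S : greedy_run Uf S [::] S
| greedy_cons S c cs S' S'' :
    greedy_step Uf S c.1 S' -> greedy_run Uf S' cs S'' -> greedy_run Uf S (c :: cs) S''.

(* T is a possible output of Algorithm 1 (for some max-weight matching, some
   processing order of the unmatched copies and some tie-breaking). *)
Definition alg1_output {R : realFieldType} {N M : nat}
  (Uf : 'I_M -> {set 'I_N} -> R) (l : 'I_N -> nat) (T : assignment N M) : Prop :=
  exists (m : {ffun 'I_M -> option ('I_N * 'I_M)}) (ord : seq ('I_N * 'I_M))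
         (Sfin : assignment N M),
    [/\ max_weight_matching Uf l m,
        uniq ord /\ (forall c, (c \in ord) = unmatched l m c),
        greedy_run Uf (matched_assign m) ord Sfin &
        (if throughput Uf Sfin < maxover [set: 'I_M] (fun k => Uf k [set: 'I_N])
         then exists kstar : 'I_M,
                (forall k, Uf k [set: 'I_N] <= Uf kstar [set: 'I_N]) /\
                T = [ffun k => if k == kstar then [set: 'I_N] else set0]
         else T = Sfin)].

Definition U1 {R : realFieldType} {N M : nat}
  (Uf : 'I_M -> {set 'I_N} -> R) (k : 'I_M) (i : 'I_N) : R := Uf k [set i].
Definition U0 {R : realFieldType} {N M : nat}
  (Uf : 'I_M -> {set 'I_N} -> R) (k : 'I_M) : R := minover [set: 'I_N] (U1 Uf k).
Definition Ustar {R : realFieldType} {N M : nat}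
  (Uf : 'I_M -> {set 'I_N} -> R) (k : 'I_M) : R := maxover [set: 'I_N] (U1 Uf k).

(* g k = the index i of the group C_i containing channel k *)
Definition valid_partition {R : realFieldType} {N M : nat}
  (Uf : 'I_M -> {set 'I_N} -> R) (g : 'I_M -> 'I_N) : Prop :=
  forall k j, U1 Uf k j <= U1 Uf k (g k).

Definition Cgrp {N M : nat} (g : 'I_M -> 'I_N) (i : 'I_N) : {set 'I_M} :=
  [set k | g k == i].
Definition rgrp {N M : nat} (g : 'I_M -> 'I_N) (i : 'I_N) : nat := #|Cgrp g i|.

(* Cl i = C_i^{l_i}: the first min(l_i, r_i) channels of C_i in some
   non-increasing order of U_k^0. *)
Definition valid_top {R : realFieldType} {N M : nat}
  (Uf : 'I_M -> {set 'I_N} -> R) (l : 'I_N -> nat) (g : 'I_M -> 'I_N)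
  (Cl : 'I_N -> {set 'I_M}) : Prop :=
  forall i, [/\ Cl i \subset Cgrp g i,
                #|Cl i| = minn (l i) (rgrp g i) &
                forall k k', k \in Cl i -> k' \in Cgrp g i :\: Cl i ->
                  U0 Uf k' <= U0 Uf k].

Definition lambda {R : realFieldType} {N M : nat} (l : 'I_N -> nat)
  (g : 'I_M -> 'I_N) (i : 'I_N) : R :=
  (minn (l i) (rgrp g i))%:R / (rgrp g i)%:R.

Definition rho {R : realFieldType} {N M : nat}
  (Uf : 'I_M -> {set 'I_N} -> R) (Cl : 'I_N -> {set 'I_M}) (i : 'I_N) : R :=
  minover (Cl i) (fun k => Ustar Uf k / U0 Uf k).

(* lambda_i (rho_i - 1); when C_i^{l_i} is empty (l_i = 0) lambda_i = 0, so the
   term is 0. *)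
Definition mu_term {R : realFieldType} {N M : nat}
  (Uf : 'I_M -> {set 'I_N} -> R) (l : 'I_N -> nat) (g : 'I_M -> 'I_N)
  (Cl : 'I_N -> {set 'I_M}) (i : 'I_N) : R :=
  if Cl i == set0 then 0 else lambda l g i * (rho Uf Cl i - 1).

Definition mu {R : realFieldType} {N M : nat}
  (Uf : 'I_M -> {set 'I_N} -> R) (l : 'I_N -> nat) (g : 'I_M -> 'I_N)
  (Cl : 'I_N -> {set 'I_M}) : R :=
  1 + minover [set i | (0 < rgrp g i)%N] (mu_term Uf l g Cl).

From HB Require Import structures.
From mathcomp Require Import all_boot all_order all_algebra.
From mathcomp Require Import ring lra zify.
Import Order.TTheory GRing.Theory Num.Theory.
Set Implicit Arguments. Unset Strict Implicit. Unset Printing Implicit Defensive.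

(* OPT <= 2 * sum_k U_k^0: every U_k(A) is at most theta_1 + theta_2 <= 2 max(theta_1, theta_2),
   and already a single SU gives U_k({s_i}) >= max(theta_1, theta_2).  Conversely some matching
   has weight >= mu * sum_k U_k^0: match each channel of C_i^{l_i} to a copy of s_i (value
   U_k^* >= rho_i U_k^0) and every other channel to a spare copy (value >= U_k^0).  Inside C_i
   the channels of C_i^{l_i} have the largest U^0, so they carry at least a lambda_i share of
   the group's U^0 mass, which yields the factor 1 + lambda_i (rho_i - 1) >= mu.  Finally the
   greedy phase and the comparison with max_k U_k(S) never decrease the throughput because
   U_k is monotone: adding an SU refines every observation y into two, and max is subadditive. *)

Lemma card_ord_range M a b : (a <= b <= M)%N -> #|[set j : 'I_M | a <= j < b]| = b - a.
Proof.
case/andP=> ab bM; rewrite -sum1_card.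
rewrite (eq_bigl (fun j : 'I_M => xpredT j && (a <= j) && (j < b))) => [|j]; last by rewrite inE.
rewrite -(@big_ord_widen_cond _ 0 addn b M (fun j => xpredT j && (a <= j)) (fun _ => 1) bM).
by rewrite -(@big_geq_mkord _ 0 addn a b xpredT (fun _ => 1)) sum_nat_const_nat muln1.
Qed.

Lemma card_pairs_range N M (c l : 'I_N -> nat) : (forall i, c i <= l i <= M) ->
  #|[set p : 'I_N * 'I_M | c p.1 <= p.2 < l p.1]| = \sum_i (l i - c i).
Proof.
move=> cl; under eq_bigr => i _ do rewrite -(@card_ord_range M _ _ (cl i)) -sum1_card.
by rewrite pair_big_dep -sum1_card; apply: eq_bigl => -[i j]; rewrite !inE.
Qed.

(* [d] only witnesses that [U] is inhabited whenever [T] is. *)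
Lemma exists_inj_in (T U : finType) (D : {set T}) (E : {set U}) (d : T -> U) :
  #|D| <= #|E| -> exists2 f : T -> U, {in D &, injective f} & {in D, forall x, f x \in E}.
Proof.
move=> DE; have idx_lt x : x \in D -> index x (enum D) < size (enum E).
  by move=> xD; rewrite -cardE (leq_trans _ DE) // cardE index_mem mem_enum.
exists (fun x => nth (d x) (enum E) (index x (enum D))); last first.
  by move=> x xD; have := mem_nth (d x) (idx_lt x xD); rewrite mem_enum.
move=> x y xD yD; rewrite (set_nth_default (d x) (d y)) ?idx_lt //.
move/eqP; rewrite nth_uniq ?enum_uniq ?idx_lt // => /eqP.
by apply: (index_inj x); rewrite mem_enum.
Qed.

(* The channels of C_i^{l_i} take the first #|Cl i| copies of s_i; the other channels are
   injected into the unused copies, of which there are enough because M <= sum_i l_i. *)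
Section CoveringMatching.
Variables (N M : nat) (l : 'I_N -> nat) (g : 'I_M -> 'I_N) (Cl : 'I_N -> {set 'I_M}).
Hypotheses (l_le_M : forall i, l i <= M) (M_le_sum_l : M <= \sum_i l i).
Hypotheses (Cl_sub : forall i, Cl i \subset Cgrp g i) (Cl_le_l : forall i, #|Cl i| <= l i).

Let reserved := [set k : 'I_M | k \in Cl (g k)].
Let spare := [set p : 'I_N * 'I_M | #|Cl p.1| <= p.2 < l p.1].

Lemma card_reserved : #|reserved| = \sum_i #|Cl i|.
Proof.
rewrite -sum1_card (partition_big g xpredT) //=; apply: eq_bigr => i _.
rewrite -sum1_card; apply: eq_bigl => k; rewrite inE.
case: eqP => [<-|gk_i]; first by rewrite andbT.
by rewrite andbF; apply/esym/negP => /(subsetP (Cl_sub i)); rewrite inE => /eqP.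
Qed.

Lemma card_unreserved_le : #|~: reserved| <= #|spare|.
Proof.
rewrite (@card_pairs_range N M (fun i => #|Cl i|) l) => [|i]; last by rewrite Cl_le_l l_le_M.
rewrite sumnB // -card_reserved; have := cardsC reserved; rewrite card_ord; lia.
Qed.

Lemma exists_covering_matching : exists m : {ffun 'I_M -> option ('I_N * 'I_M)},
  matching l m /\ forall k, exists c, m k = Some c /\ (k \in Cl (g k) -> c.1 = g k).
Proof.
have [f f_inj f_spare] := exists_inj_in (fun k => (g k, k)) card_unreserved_le.
pose copy k := if k \in Cl (g k) then (g k, insubd k (index k (enum (Cl (g k))))) else f k.
have copy_res k : k \in Cl (g k) ->
    [/\ (copy k).1 = g k, val (copy k).2 = index k (enum (Cl (g k))) & val (copy k).2 < #|Cl (g k)|].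
  move=> k_res; have idx_lt : index k (enum (Cl (g k))) < #|Cl (g k)|.
    by rewrite cardE index_mem mem_enum.
  rewrite /copy k_res val_insubd (leq_trans idx_lt (leq_trans (Cl_le_l _) (l_le_M _))).
  by split.
have copy_unres k : k \notin Cl (g k) -> copy k = f k /\ copy k \in spare.
  by move=> k_unres; rewrite /copy (negbTE k_unres) f_spare // !inE.
have resE k : (k \in Cl (g k)) = (val (copy k).2 < #|Cl (copy k).1|).
  have [k_res|k_unres] := boolP (k \in Cl (g k)).
    by have [-> _ ->] := copy_res k k_res.
  by have [_] := copy_unres k k_unres; rewrite inE => /andP [/leq_gtF ->].
exists [ffun k => Some (copy k)]; split; last first.
  by move=> k; exists (copy k); rewrite ffunE; split => // /copy_res [].
split=> [k c | k k' c]; rewrite !ffunE => -[<-].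
  have [k_res|k_unres] := boolP (k \in Cl (g k)).
    by have [-> _ lt] := copy_res k k_res; apply: leq_trans lt (Cl_le_l _).
  by have [_] := copy_unres k k_unres; rewrite inE => /andP [].
move=> [] /esym eq_copy.
have res_eq : (k' \in Cl (g k')) = (k \in Cl (g k)) by rewrite resE -eq_copy -resE.
have [k_res|k_unres] := boolP (k \in Cl (g k)).
  have k'_res : k' \in Cl (g k') by rewrite res_eq.
  have [g1 v1 _] := copy_res k k_res; have [g2 v2 _] := copy_res k' k'_res.
  have eq_g : g k' = g k by rewrite -g2 -eq_copy g1.
  rewrite eq_g in k'_res v2; apply: (@index_inj _ k (enum (Cl (g k)))); rewrite ?mem_enum //.
  by rewrite -v1 eq_copy v2.
have k'_unres : k' \notin Cl (g k') by rewrite res_eq.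
have [e1 _] := copy_unres k k_unres; have [e2 _] := copy_unres k' k'_unres.
by apply: f_inj; rewrite ?inE // -e1 -e2.
Qed.

End CoveringMatching.

Lemma lt0n_sum_ord N (F : 'I_N -> nat) : 0 < \sum_(i < N) F i -> 0 < N.
Proof. by case: N F => // F; rewrite big_ord0. Qed.

Local Open Scope ring_scope.

Lemma setU1_ind (T : finType) (P : {set T} -> Prop) :
  P set0 -> (forall (i : T) (A : {set T}), i \notin A -> P A -> P (i |: A)) ->
  forall A, P A.
Proof.
move=> P0 PU1 A; elim: {A}#|A| {-2}A (erefl #|A|) => [|n IHn] A cardA.
  by move/eqP: cardA; rewrite cards_eq0 => /eqP ->.
have /set0Pn [i iA] : A != set0 by rewrite -card_gt0 cardA.
rewrite -(setD1K iA); apply: PU1; first by rewrite !inE eqxx.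
by apply: IHn; move: cardA; rewrite (cardsD1 i) iA add1n => -[].
Qed.

Lemma notin_subset (T : finType) (i : T) (A Y : {set T}) :
  i \notin A -> Y \subset A -> i \notin Y.
Proof. by move=> iA /subsetP YA; apply: contra iA => /YA. Qed.

Lemma big_powersetU1 (R : Type) (idx : R) (op : Monoid.com_law idx)
    (T : finType) (F : {set T} -> R) (i : T) (A : {set T}) :
  i \notin A ->
  \big[op/idx]_(Y in powerset (i |: A)) F Y
    = \big[op/idx]_(Y in powerset A) op (F Y) (F (i |: Y)).
Proof.
move=> iA; rewrite big_split [LHS](bigID (fun Y : {set T} => i \in Y)) /= Monoid.mulmC.
congr (op _ _).
  apply: eq_bigl => Y; rewrite !powersetE; apply/andP/idP => [[YiA iY]|YA].
    apply/subsetP => x xY; move/subsetP/(_ x xY): YiA; rewrite !inE.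
    by case/predU1P => // xi; rewrite -xi xY in iY.
  by rewrite (subset_trans YA (subsetUr _ _)) (notin_subset iA YA).
rewrite (reindex_onto (fun Y => i |: Y) (fun Y => Y :\ i)) /=; last first.
  by move=> Y /andP [_ iY]; rewrite setD1K.
apply: eq_bigl => Y; rewrite !powersetE setU11 andbT.
apply/andP/idP => [[YiA /eqP <-]|YA].
  by rewrite -(setU1K iA) setSD.
by rewrite setUS // setU1K // (notin_subset iA YA).
Qed.

Section ProductMeasure.
Variables (R : comPzRingType) (T : finType) (p q : T -> R).

(* Probability that, among the independent sensors in A, exactly those in Y report 1, when
   sensor i reports 1 with probability p i and 0 with probability q i. *)
Definition bprod (A Y : {set T}) : R := (\prod_(i in Y) p i) * \prod_(i in A :\: Y) q i.

Lemma bprodU1_out (i : T) (A Y : {set T}) :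
  i \notin A -> Y \subset A -> bprod (i |: A) Y = bprod A Y * q i.
Proof.
rewrite /bprod => iA YA; have iAY : i \notin A :\: Y by rewrite inE negb_and iA orbT.
have -> : (i |: A) :\: Y = i |: (A :\: Y).
  by apply/setP => x; rewrite !inE; case: eqP => // ->; rewrite (notin_subset iA YA).
by rewrite big_setU1 //= mulrCA mulrC.
Qed.

Lemma bprodU1_in (i : T) (A Y : {set T}) :
  i \notin A -> Y \subset A -> bprod (i |: A) (i |: Y) = bprod A Y * p i.
Proof.
move=> iA YA; rewrite /bprod big_setU1 ?(notin_subset iA YA) //=.
have -> : (i |: A) :\: (i |: Y) = A :\: Y.
  by apply/setP => x; rewrite !inE; case: eqP => // ->; rewrite (negbTE iA) andbF.
by rewrite [RHS]mulrC mulrA.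
Qed.

Lemma sum_bprod (A : {set T}) :
  \sum_(Y in powerset A) bprod A Y = \prod_(i in A) (p i + q i).
Proof.
elim/setU1_ind: A => [|i A iA IH].
  by rewrite powerset0 big_set1 big_set0 /bprod setDv !big_set0 mulr1.
rewrite big_powersetU1 // big_setU1 //= -IH mulr_sumr; apply: eq_big => // Y.
rewrite powersetE => YA; rewrite bprodU1_in // bprodU1_out //; ring.
Qed.

End ProductMeasure.

Lemma max_le_split (R : realDomainType) (x y s s' t t' : R) :
  0 <= x -> 0 <= y -> 0 <= s -> 0 <= s' -> 0 <= t -> 0 <= t' ->
  s + s' = 1 -> t + t' = 1 ->
  Num.max x y <= Num.max (x * s) (y * t) + Num.max (x * s') (y * t').
Proof.
move=> x0 y0 s0 s'0 t0 t'0 ss' tt'; rewrite ge_max; apply/andP; split.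
  rewrite -[x in x <= _]mulr1 -ss' mulrDr.
  by apply: lerD; rewrite le_max lexx.
rewrite -[y in y <= _]mulr1 -tt' mulrDr.
by apply: lerD; rewrite le_max lexx orbT.
Qed.

Definition prob_pair (R : numDomainType) (T : Type) (p q : T -> R) :=
  forall i, [/\ 0 <= p i, 0 <= q i & p i + q i = 1].

Lemma bprod_ge0 (R : numDomainType) (T : finType) (p q : T -> R) (A Y : {set T}) :
  prob_pair p q -> 0 <= bprod p q A Y.
Proof. by move=> pq; rewrite mulr_ge0 // prodr_ge0 // => i; case: (pq i). Qed.

Section OptimalFusion.
Variables (R : realDomainType) (T : finType) (a b : R) (p1 q1 p2 q2 : T -> R).
Hypotheses (a_ge0 : 0 <= a) (b_ge0 : 0 <= b).
Hypotheses (pq1 : prob_pair p1 q1) (pq2 : prob_pair p2 q2).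

Definition fusion (A : {set T}) : R :=
  \sum_(Y in powerset A) Num.max (a * bprod p1 q1 A Y) (b * bprod p2 q2 A Y).

Lemma fusion0 : fusion set0 = Num.max a b.
Proof. by rewrite /fusion powerset0 big_set1 /bprod setDv !big_set0 !mulr1. Qed.

Lemma fusionU1 (i : T) (A : {set T}) : i \notin A -> fusion A <= fusion (i |: A).
Proof.
move=> iA; rewrite /fusion big_powersetU1 //; apply: ler_sum => Y.
rewrite powersetE => YA; rewrite !bprodU1_in // !bprodU1_out //.
have := bprod_ge0 A Y pq1; have := bprod_ge0 A Y pq2; have [? ? ?] := pq1 i; have [? ? ?] := pq2 i.
move: (bprod p1 q1 A Y) (bprod p2 q2 A Y) => P1 P2 P2_ge0 P1_ge0.
by rewrite !mulrA; apply: max_le_split; rewrite 1?addrC ?mulr_ge0.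
Qed.

Lemma fusion_ge (A : {set T}) : Num.max a b <= fusion A.
Proof.
elim/setU1_ind: A => [|i A iA IH]; first by rewrite fusion0.
exact: le_trans IH (fusionU1 iA).
Qed.

Lemma fusion_le (A : {set T}) : fusion A <= a + b.
Proof.
have sum1 (p q : T -> R) : prob_pair p q -> \sum_(Y in powerset A) bprod p q A Y = 1.
  by move=> pq; rewrite sum_bprod big1 // => i _; case: (pq i).
rewrite -[a]mulr1 -[b]mulr1 -{1}(sum1 _ _ pq1) -(sum1 _ _ pq2) !mulr_sumr -big_split.
apply: ler_sum => Y _; rewrite ge_max; apply/andP; split.
  by rewrite lerDl mulr_ge0 // bprod_ge0.
by rewrite lerDr mulr_ge0 // bprod_ge0.
Qed.

End OptimalFusion.

Section SensingUtility.
Variables (R : realFieldType) (N M : nat) (Pf Pm : 'I_N -> 'I_M -> R) (Tc : R).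
Variables (pi0 gamma : 'I_M -> R).
Hypotheses (Pf01 : forall i k, 0 <= Pf i k <= 1) (Pm01 : forall i k, 0 <= Pm i k <= 1).
Hypotheses (Tc01 : 0 <= Tc < 1) (pi001 : forall k, 0 <= pi0 k <= 1).
Hypothesis gamma_gt0 : forall k, 0 < gamma k.

Local Notation U := (Uk Pf Pm Tc pi0 gamma).
Local Notation th1 := (theta1 Tc pi0).
Local Notation th2 := (theta2 gamma pi0).

Lemma theta1_ge0 k : 0 <= th1 k.
Proof. by have := pi001 k; rewrite /theta1; case/andP: Tc01; nra. Qed.

Lemma theta2_ge0 k : 0 <= th2 k.
Proof. by have := pi001 k; have := gamma_gt0 k; rewrite /theta2; nra. Qed.

Lemma theta_max_gt0 k : 0 < Num.max (th2 k) (th1 k).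
Proof.
rewrite lt_max /theta1 /theta2; have := gamma_gt0 k; have /andP [] := pi001 k.
case/andP: Tc01 => _ Tc_lt1; rewrite le_eqVlt => /predU1P [<- _ _ | pi0_gt0 _ _].
  by rewrite subr0 mulr1 gamma_gt0.
by rewrite orbC mulr_gt0 // subr_gt0.
Qed.

Lemma Pm_prob_pair k : prob_pair (fun i => 1 - Pm i k) (Pm ^~ k).
Proof. by move=> i; have /andP [? ?] := Pm01 i k; split; rewrite ?subr_ge0 ?subrK. Qed.

Lemma Pf_prob_pair k : prob_pair (Pf ^~ k) (fun i => 1 - Pf i k).
Proof. by move=> i; have /andP [? ?] := Pf01 i k; split; rewrite ?subr_ge0 // addrC subrK. Qed.

Lemma Uk_fusion k (A : {set 'I_N}) : A != set0 ->
  U k A = fusion (th2 k) (th1 k) (fun i => 1 - Pm i k) (Pm ^~ k) (Pf ^~ k) (fun i => 1 - Pf i k) A.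
Proof. by rewrite /Uk => /negbTE ->. Qed.

Lemma Uk_ge_theta k (A : {set 'I_N}) : A != set0 -> Num.max (th2 k) (th1 k) <= U k A.
Proof.
move=> A0; rewrite Uk_fusion //.
exact: fusion_ge (theta2_ge0 k) (theta1_ge0 k) (Pm_prob_pair k) (Pf_prob_pair k) A.
Qed.

Lemma Uk_ge0 k (A : {set 'I_N}) : 0 <= U k A.
Proof.
have [->|A0] := eqVneq A set0; first by rewrite /Uk eqxx theta2_ge0.
exact: le_trans (ltW (theta_max_gt0 k)) (Uk_ge_theta k A0).
Qed.

Lemma Uk_le_theta k (A : {set 'I_N}) : U k A <= th2 k + th1 k.
Proof.
have [->|A0] := eqVneq A set0; first by rewrite /Uk eqxx lerDl theta1_ge0.
rewrite Uk_fusion //.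
exact: fusion_le (theta2_ge0 k) (theta1_ge0 k) (Pm_prob_pair k) (Pf_prob_pair k) A.
Qed.

Lemma Uk_subU1 k (i : 'I_N) (A : {set 'I_N}) : U k A <= U k (i |: A).
Proof.
have [iA|iA] := boolP (i \in A); first by rewrite (setUidPr _) // sub1set.
have iA0 : i |: A != set0 by apply/set0Pn; exists i; rewrite setU11.
have [A0|A0] := eqVneq A set0.
  by apply: le_trans _ (Uk_ge_theta k iA0); rewrite A0 /Uk eqxx le_max lexx.
rewrite !Uk_fusion //.
exact: (fusionU1 (theta2_ge0 k) (theta1_ge0 k) (Pm_prob_pair k) (Pf_prob_pair k) iA).
Qed.

Lemma U0_ge_theta k : (0 < N)%N -> Num.max (th2 k) (th1 k) <= U0 U k.
Proof.
move=> N_gt0; have set1_ge (i : 'I_N) : Num.max (th2 k) (th1 k) <= U1 U k i.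
  by apply: Uk_ge_theta; apply/set0Pn; exists i; rewrite set11.
by apply: le_bigmin => [|i _]; rewrite // (bigmax_sup (Ordinal N_gt0)) ?inE.
Qed.

Lemma U0_gt0 k : (0 < N)%N -> 0 < U0 U k.
Proof. by move=> N_gt0; exact: lt_le_trans (theta_max_gt0 k) (U0_ge_theta k N_gt0). Qed.

Lemma Uk_le_twice_U0 k (A : {set 'I_N}) : (0 < N)%N -> U k A <= 2 * U0 U k.
Proof.
move=> N_gt0; apply: le_trans (Uk_le_theta k A) _.
have := U0_ge_theta k N_gt0; rewrite ge_max => /andP [th2_le th1_le].
by rewrite mulr2n mulrDl mul1r lerD.
Qed.

End SensingUtility.

Section Algorithm.
Variables (R : realFieldType) (N M : nat) (Uf : 'I_M -> {set 'I_N} -> R) (l : 'I_N -> nat).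
Hypothesis Uf_ge0 : forall k A, 0 <= Uf k A.
Hypothesis Uf_subU1 : forall k i A, Uf k A <= Uf k (i |: A).

Lemma OPT_le_sum (b : 'I_M -> R) :
  (forall k, 0 <= b k) -> (forall k A, Uf k A <= b k) -> OPT Uf l <= \sum_k b k.
Proof.
move=> b_ge0 Uf_le; apply: bigmax_le => [|S _]; first exact: sumr_ge0.
exact: ler_sum.
Qed.

Lemma greedy_step_ge S i S' : greedy_step Uf S i S' -> throughput Uf S <= throughput Uf S'.
Proof.
case=> [[k _ [_ ->]] | [_ ->] //]; apply: ler_sum => k' _.
by rewrite ffunE; case: eqP => // ->.
Qed.

Lemma greedy_run_ge S cs S' : greedy_run Uf S cs S' -> throughput Uf S <= throughput Uf S'.
Proof. by elim=> // {}S c {}cs S1 S2 /greedy_step_ge S_le _ /(le_trans S_le). Qed.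

Lemma weight_le_matched m : weight Uf m <= throughput Uf (matched_assign m).
Proof. by apply: ler_sum => k _; rewrite ffunE; case: (m k). Qed.

Lemma alg1_output_ge_weight m' T :
  matching l m' -> alg1_output Uf l T -> weight Uf m' <= throughput Uf T.
Proof.
move=> m'_match [m [ord [S [[_ m_max] _ run fallback]]]].
apply: le_trans (m_max _ m'_match) _; apply: le_trans (weight_le_matched m) _.
apply: le_trans (greedy_run_ge run) _; move: fallback; case: ltP => [S_lt|_ -> //].
case=> kstar [kstar_max ->]; apply: le_trans (ltW S_lt) _.
apply: (@le_trans _ _ (Uf kstar [set: 'I_N])).
  by apply: bigmax_le => [|k _]; [exact: (bigmin_inf kstar) | exact: kstar_max].
by rewrite /throughput (bigD1 kstar) //= ffunE eqxx lerDl sumr_ge0.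
Qed.

End Algorithm.

Lemma frac_sum_le_sum_top (R : realFieldType) (T : finType) (C D : {set T}) (u : T -> R) :
  D \subset C -> (forall x y, x \in D -> y \in C :\: D -> u y <= u x) ->
  #|D|%:R / #|C|%:R * \sum_(k in C) u k <= \sum_(k in D) u k.
Proof.
move=> DC u_top; have [/eqP|C_gt0] := posnP #|C|.
  rewrite cards_eq0 => /eqP C0; move: DC; rewrite C0 subset0 => /eqP ->.
  by rewrite !big_set0 mulr0.
have [card_C sum_C] : #|C| = (#|D| + #|C :\: D|)%N /\
    \sum_(k in C) u k = \sum_(k in D) u k + \sum_(k in C :\: D) u k.
  by rewrite -(cardsID D C) (big_setID D) /= (setIidPr DC).
have key : (\sum_(k in C :\: D) u k) * #|D|%:R <= (\sum_(k in D) u k) * #|C :\: D|%:R.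
  rewrite !mulr_natr -sumr_const -sumrMnl; apply: ler_sum => x xD.
  by rewrite -sumr_const; apply: ler_sum => y yCD; exact: u_top.
rewrite mulrAC ler_pdivrMr ?ltr0n // card_C sum_C natrD.
by rewrite mulrDr mulrDr mulrC lerD2l mulrC.
Qed.

Lemma scaled_sum_le (R : realFieldType) (t lam rho a b : R) :
  t <= lam * (rho - 1) -> lam * (a + b) <= a -> 1 <= rho -> 0 <= a + b ->
  (1 + t) * (a + b) <= rho * a + b.
Proof.
move=> t_le lam_le rho_ge1 ab_ge0.
have : 0 <= (lam * (rho - 1) - t) * (a + b) by rewrite mulr_ge0 // subr_ge0.
have : 0 <= (rho - 1) * (a - lam * (a + b)) by rewrite mulr_ge0 // subr_ge0.
lra.
Qed.

Section Mu.
Variables (R : realFieldType) (N M : nat) (Uf : 'I_M -> {set 'I_N} -> R) (l : 'I_N -> nat).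
Variables (g : 'I_M -> 'I_N) (Cl : 'I_N -> {set 'I_M}).
Hypothesis U0_pos : forall k, 0 < U0 Uf k.
Hypothesis g_part : valid_partition Uf g.
Hypothesis Cl_top : valid_top Uf l g Cl.

Lemma Ustar_le_U1 k : Ustar Uf k <= U1 Uf k (g k).
Proof. by apply: bigmax_le => [|i _]; [exact: (bigmin_inf (g k)) | exact: g_part]. Qed.

Lemma U0_le_Ustar k : U0 Uf k <= Ustar Uf k.
Proof. by apply: (bigmin_inf (g k)) => //; apply: le_bigmax_cond. Qed.

Lemma rho_ge1 i : Cl i != set0 -> 1 <= rho Uf Cl i.
Proof.
case/set0Pn=> k0 k0_Cl.
have ratio_ge1 k : 1 <= Ustar Uf k / U0 Uf k by rewrite ler_pdivlMr // mul1r U0_le_Ustar.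
by apply: le_bigmin => [|k _]; [exact: (bigmax_sup k0) | exact: ratio_ge1].
Qed.

Lemma mu_term_ge0 i : 0 <= mu_term Uf l g Cl i.
Proof.
rewrite /mu_term; case: eqP => // /eqP Cl0.
by rewrite mulr_ge0 ?divr_ge0 // subr_ge0 rho_ge1.
Qed.

Lemma mu_ge1 : 1 <= mu Uf l g Cl.
Proof.
rewrite lerDl; apply: le_bigmin => [|i _]; last exact: mu_term_ge0.
by apply: bigmax_ge_id.
Qed.

Section Cover.
Variable w : 'I_M -> R.
Hypothesis w_ge_U1 : forall k, k \in Cl (g k) -> U1 Uf k (g k) <= w k.
Hypothesis w_ge_U0 : forall k, U0 Uf k <= w k.

Lemma rho_sum_U0_le i :
  rho Uf Cl i * \sum_(k in Cl i) U0 Uf k <= \sum_(k in Cl i) w k.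
Proof.
have [Cl_sub _ _] := Cl_top i; rewrite mulr_sumr; apply: ler_sum => k k_Cl.
have k_Clg : k \in Cl (g k).
  by move/subsetP/(_ k k_Cl): Cl_sub; rewrite inE => /eqP ->.
apply: le_trans _ (w_ge_U1 k_Clg); apply: le_trans _ (Ustar_le_U1 k).
by rewrite -ler_pdivlMr //; apply: bigmin_le_cond.
Qed.

Lemma mu_group_le i :
  mu Uf l g Cl * \sum_(k in Cgrp g i) U0 Uf k <= \sum_(k in Cgrp g i) w k.
Proof.
have [Cl_sub Cl_card Cl_max] := Cl_top i.
have sumU0_ge0 (A : {set 'I_M}) : 0 <= \sum_(k in A) U0 Uf k.
  by apply: sumr_ge0 => k _; exact: ltW.
have [/eqP|r_gt0] := posnP (rgrp g i).
  by rewrite cards_eq0 => /eqP ->; rewrite !big_set0 mulr0.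
have mu_le : mu Uf l g Cl <= 1 + mu_term Uf l g Cl i.
  by rewrite lerD2l; apply: bigmin_le_cond; rewrite inE.
have [Cl0|Cl_ne0] := eqVneq (Cl i) set0.
  have sumU0_le_w : \sum_(k in Cgrp g i) U0 Uf k <= \sum_(k in Cgrp g i) w k.
    by apply: ler_sum => k _; exact: w_ge_U0.
  apply: le_trans sumU0_le_w; rewrite /mu_term Cl0 eqxx addr0 in mu_le.
  by rewrite ler_piMl.
have sumCl_le := rho_sum_U0_le i.
have sumCD_le : \sum_(k in Cgrp g i :\: Cl i) U0 Uf k <= \sum_(k in Cgrp g i :\: Cl i) w k.
  by apply: ler_sum => k _; exact: w_ge_U0.
have frac_le := frac_sum_le_sum_top Cl_sub Cl_max.
have split_sum (F : 'I_M -> R) : \sum_(k in Cgrp g i) F k =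
    \sum_(k in Cl i) F k + \sum_(k in Cgrp g i :\: Cl i) F k.
  by rewrite (big_setID (Cl i)) /= (setIidPr Cl_sub).
rewrite !split_sum in frac_le *.
apply: le_trans (lerD sumCl_le sumCD_le).
apply: le_trans (ler_wpM2r (addr_ge0 (sumU0_ge0 _) (sumU0_ge0 _)) mu_le) _.
apply: scaled_sum_le (rho_ge1 Cl_ne0) (addr_ge0 (sumU0_ge0 _) (sumU0_ge0 _)).
  by rewrite /mu_term (negbTE Cl_ne0).
by rewrite /lambda -Cl_card.
Qed.

Lemma mu_sum_U0_le : mu Uf l g Cl * \sum_k U0 Uf k <= \sum_k w k.
Proof.
rewrite !(partition_big g xpredT) //= mulr_sumr; apply: ler_sum => i _.
have group_sum (F : 'I_M -> R) : \sum_(k | g k == i) F k = \sum_(k in Cgrp g i) F k.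
  by apply: eq_bigl => k; rewrite inE.
by rewrite !group_sum mu_group_le.
Qed.

End Cover.

End Mu.

Theorem proposition2 (R : realFieldType) (N M : nat)
  (Pf Pm : 'I_N -> 'I_M -> R) (Tc : R) (pi0 gamma : 'I_M -> R)
  (l : 'I_N -> nat) :
  (forall i k, 0 <= Pf i k <= 1) ->
  (forall i k, 0 <= Pm i k <= 1) ->
  0 <= Tc < 1 ->
  (forall k, 0 <= pi0 k <= 1) ->
  (forall k, 0 < gamma k) ->
  (forall i, (l i <= M)%N) ->
  (M <= \sum_(i < N) l i)%N ->
  forall (g : 'I_M -> 'I_N) (Cl : 'I_N -> {set 'I_M}) (T : assignment N M),
    valid_partition (Uk Pf Pm Tc pi0 gamma) g ->
    valid_top (Uk Pf Pm Tc pi0 gamma) l g Cl ->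
    alg1_output (Uk Pf Pm Tc pi0 gamma) l T ->
    1 / 2 * mu (Uk Pf Pm Tc pi0 gamma) l g Cl * OPT (Uk Pf Pm Tc pi0 gamma) l
      <= throughput (Uk Pf Pm Tc pi0 gamma) T.
Proof.
move=> Pf01 Pm01 Tc01 pi001 gamma_gt0 l_le_M M_le_sum_l g Cl T g_part Cl_top alg_T.
set U := Uk Pf Pm Tc pi0 gamma.
have N_gt0 (k : 'I_M) : (0 < N)%N.
  by apply: (@lt0n_sum_ord _ l); have := ltn_ord k; lia.
have U0_pos k : 0 < U0 U k := U0_gt0 Pf01 Pm01 Tc01 pi001 gamma_gt0 k (N_gt0 k).
have Cl_sub i : Cl i \subset Cgrp g i by case: (Cl_top i).
have Cl_le_l i : (#|Cl i| <= l i)%N by case: (Cl_top i) => _ -> _; exact: geq_minl.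
have [m [m_matching m_cover]] := exists_covering_matching l_le_M M_le_sum_l Cl_sub Cl_le_l.
have mu_le : mu U l g Cl * \sum_k U0 U k <= weight U m.
  rewrite /weight; apply: (mu_sum_U0_le U0_pos g_part Cl_top) => k;
    have [c [-> c_res]] := m_cover k.
    by move=> /c_res <-.
  exact: bigmin_le_cond.
have OPT_le : OPT U l <= 2 * \sum_k U0 U k.
  rewrite mulr_sumr; apply: OPT_le_sum => [k | k A]; first by rewrite mulr_ge0 // ltW.
  exact: (Uk_le_twice_U0 Pf01 Pm01 Tc01 pi001 gamma_gt0 k A (N_gt0 k)).
have ALG_ge : weight U m <= throughput U T.
  apply: (alg1_output_ge_weight _ _ m_matching alg_T) => [k A | k i A].
    exact: (Uk_ge0 Pf01 Pm01 Tc01 pi001 gamma_gt0).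
  exact: (Uk_subU1 Pf01 Pm01 Tc01 pi001 gamma_gt0).
have mu_ge0 : 0 <= mu U l g Cl by apply: le_trans ler01 _; apply: mu_ge1.
apply: le_trans (le_trans mu_le ALG_ge).
have -> : mu U l g Cl * \sum_k U0 U k = 1 / 2 * mu U l g Cl * (2 * \sum_k U0 U k) by field.
by apply: ler_wpM2l => //; rewrite mulr_ge0 // divr_ge0.
Qed.
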